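(* Every finite graph is isomorphic to an induced subgraph of the commuting graph of some finite group. This group can be taken to be nilpotent of class $2$ and exponent $4$.
   Context: The commuting graph of a group $G$ has vertex set $G$, distinct $x,y$ adjacent iff $xy=yx$. *)

From mathcomp Require Import all_boot all_fingroup all_solvable.
Set Implicit Arguments. Unset Strict Implicit. Unset Printing Implicit Defensive.

Definition simple_graph (V : finType) (adj : rel V) : Prop :=
  symmetric adj /\ irreflexive adj.

Definition commuting_adj (gT : finGroupType) (x y : gT) : Prop :=
  x != y /\ commute x y.

Definition induced_commuting_embedding (V : finType) (adj : rel V)
  (gT : finGroupType) (f : V -> gT) : Prop :=
  injective f /\ forall u v : V, adj u v <-> commuting_adj (f u) (f v).

From HB Require Import structures.
From mathcomp Require Import all_boot all_fingroup all_solvable.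
Set Implicit Arguments. Unset Strict Implicit. Unset Printing Implicit Defensive.
Set Warnings "-redundant-canonical-projection".

(* Let m be a relation on a finite set I.  On pairs (a, b) with a a vector of
   F_2^I and b a vector of F_2^(I x I) put the product
   (a, b) (c, d) = (a + c, b + d + beta(a, c)), where the bilinear cocycle is
   beta(a, c)(p, q) = m p q a_p c_q.  Commutators and squares have trivial
   first component, hence are central, so the group has class at most 2 and
   exponent dividing 4.  The commutator of the basis vectors e_i, e_j is
   (0, beta(e_i, e_j) + beta(e_j, e_i)), trivial exactly when m i j and m j i
   both fail.  Taking for m the non-adjacency of the graph, enlarged by two
   extra vertices related to everything, the basis vectors of the vertices
   realise the graph as an induced commuting subgraph, while the two extra
   vertices force class exactly 2 and exponent exactly 4. *)

Lemma exponent_eq_pfactor (gT : finGroupType) (G : {group gT}) p n x :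
  prime p -> {in G, forall y, (y ^+ (p ^ n.+1) = 1)%g} ->
  x \in G -> (x ^+ (p ^ n) != 1)%g -> exponent G = p ^ n.+1.
Proof.
move=> p_pr expG Gx nx1.
have /(dvdn_pfactor _ _ p_pr)[k le_k_n1 expGk] : exponent G %| p ^ n.+1.
  exact/exponentP.
rewrite expGk; congr (_ ^ _); apply/eqP; rewrite eqn_leq le_k_n1 ltnNge.
apply: contra nx1 => le_k_n.
have expG_dvd_pn : exponent G %| p ^ n by rewrite expGk dvdn_exp2l.
by apply/eqP; apply: (exponentP expG_dvd_pn).
Qed.

Definition heis (I : finType) (m : rel I) : Type :=
  ({ffun I -> bool} * {ffun I * I -> bool})%type.

Section HeisenbergGroupLaw.
Variables (I : finType) (m : rel I).
Implicit Types x y z : heis m.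

Definition heis_cocycle (a c : {ffun I -> bool}) : {ffun I * I -> bool} :=
  [ffun p => [&& m p.1 p.2, a p.1 & c p.2]].

Definition heis_mul x y : heis m :=
  ([ffun i => x.1 i (+) y.1 i],
   [ffun p => x.2 p (+) y.2 p (+) heis_cocycle x.1 y.1 p]).

Definition heis_one : heis m := ([ffun => false], [ffun => false]).

Definition heis_inv x : heis m := (x.1, [ffun p => x.2 p (+) heis_cocycle x.1 x.1 p]).

Lemma heis_ext x y :
  (forall i, x.1 i = y.1 i) -> (forall p, x.2 p = y.2 p) -> x = y.
Proof. by case: x y => a b [c d] /= /ffunP-> /ffunP->. Qed.

(* Pointwise this is the cocycle identity
   beta(a, c) + beta(a + c, e) = beta(c, e) + beta(a, c + e), i.e. bilinearity. *)
Lemma heis_mulA : associative heis_mul.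
Proof.
move=> x y z; apply: heis_ext => [i|p]; rewrite !ffunE /=; first exact: addbA.
by case: (x.1 p.1) (y.1 p.1) (y.1 p.2) (z.1 p.2) (m p.1 p.2) (x.2 p) (y.2 p) (z.2 p)
  => [] [] [] [] [] [] [] [].
Qed.

Lemma heis_mul1 : left_id heis_one heis_mul.
Proof. by move=> x; apply: heis_ext => [i|p]; rewrite !ffunE /= ?andbF ?addbF. Qed.

Lemma heis_mulV : left_inverse heis_one heis_inv heis_mul.
Proof.
move=> x; apply: heis_ext => [i|p]; rewrite !ffunE /=; first exact: addbb.
by rewrite -addbA addbb.
Qed.

End HeisenbergGroupLaw.

HB.instance Definition _ (I : finType) (m : rel I) := Finite.on (heis m).
HB.instance Definition _ (I : finType) (m : rel I) :=
  Finite_isGroup.Build (heis m) (@heis_mulA I m) (@heis_mul1 I m) (@heis_mulV I m).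

Section HeisenbergGroupTheory.
Variables (I : finType) (m : rel I).
Implicit Types x y : heis m.
Local Open Scope group_scope.

Lemma heis_mul1E x y i : (x * y).1 i = x.1 i (+) y.1 i.
Proof. by rewrite ffunE. Qed.

Lemma heis_mul2E x y p :
  (x * y).2 p = x.2 p (+) y.2 p (+) [&& m p.1 p.2, x.1 p.1 & y.1 p.2].
Proof. by rewrite !ffunE. Qed.

Lemma heis_one2E p : (1 : heis m).2 p = false. Proof. by rewrite ffunE. Qed.

Lemma heis_inv1E x i : (x^-1).1 i = x.1 i. Proof. by []. Qed.

Lemma heis_center x : (forall i, x.1 i = false) -> x \in 'Z([set: heis m]).
Proof.
move=> x1_0; apply/centerP; split; first exact: in_setT.
move=> y _; apply: heis_ext => [i|p]; first by rewrite !heis_mul1E addbC.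
by rewrite !heis_mul2E !x1_0 /= !andbF !addbF addbC.
Qed.

Lemma heis_commg1E x y i : [~ x, y].1 i = false.
Proof. by rewrite !heis_mul1E !heis_inv1E; case: (x.1 i); case: (y.1 i). Qed.

Lemma heis_expg2_1E x i : (x ^+ 2).1 i = false.
Proof. by rewrite expgS expg1 heis_mul1E addbb. Qed.

Lemma heis_expg2_eq1 x : (forall i, x.1 i = false) -> x ^+ 2 = 1.
Proof.
move=> x1_0; rewrite expgS expg1.
apply: heis_ext => [i|p]; first by rewrite heis_mul1E addbb ffunE.
by rewrite heis_mul2E !x1_0 !andbF addbF addbb ffunE.
Qed.

Lemma nil_class_heis_le2 : nil_class [set: heis m] <= 2.
Proof.
rewrite nil_class2 derg1 gen_subG; apply/subsetP => _ /imset2P[x y _ _ ->].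
exact/heis_center/heis_commg1E.
Qed.

Lemma exponent_heis_dvdn4 : exponent [set: heis m] %| 4.
Proof.
apply/exponentP => x _; rewrite -[4]/(2 * 2)%N expgM.
exact/heis_expg2_eq1/heis_expg2_1E.
Qed.

Definition heis_gen i : heis m := ([ffun j => j == i], [ffun => false]).

Lemma heis_gen_inj : injective heis_gen.
Proof. by move=> i j /(congr1 (fun x => x.1 i)); rewrite !ffunE eqxx => /esym/eqP. Qed.

Lemma heis_gen_mul2E i j p :
  (heis_gen i * heis_gen j).2 p = [&& m p.1 p.2, p.1 == i & p.2 == j].
Proof. by rewrite heis_mul2E !ffunE. Qed.

Lemma commute_heis_genP i j :
  reflect (commute (heis_gen i) (heis_gen j)) ((i == j) || ~~ m i j && ~~ m j i).
Proof.
apply: (iffP idP) => [/orP[/eqP-> | /andP[mij mji]] | cij]; first exact: commute_refl.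
  have nm k l a b : ~~ m a b -> [&& m k l, k == a & l == b] = false.
    move=> mab; apply/and3P => -[mkl /eqP ka /eqP lb].
    by move: mkl; rewrite ka lb (negbTE mab).
  apply: heis_ext => [k|p]; first by rewrite !heis_mul1E addbC.
  by rewrite !heis_gen_mul2E !nm.
have e p : (heis_gen i * heis_gen j).2 p = (heis_gen j * heis_gen i).2 p by rewrite cij.
have [-> // | nij] := eqVneq i j.
move: (e (i, j)) (e (j, i)); rewrite !heis_gen_mul2E /= !eqxx (eq_sym j) (negbTE nij).
by rewrite !andbT !andbF => -> <-.
Qed.

Lemma heis_gen_expg2_2E i : (heis_gen i ^+ 2).2 (i, i) = m i i.
Proof. by rewrite expgS expg1 heis_gen_mul2E eqxx !andbT. Qed.

Lemma nil_class_heis_eq2 i j : i != j -> m i j -> nil_class [set: heis m] = 2.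
Proof.
move=> nij mij; apply/eqP; rewrite eqn_leq nil_class_heis_le2 ltnNge nil_class1.
apply/centsP => /(_ (heis_gen i) (in_setT _) (heis_gen j) (in_setT _)).
by move/commute_heis_genP; rewrite (negbTE nij) mij.
Qed.

Lemma exponent_heis_eq4 i : m i i -> exponent [set: heis m] = 4.
Proof.
move=> mii; apply: (@exponent_eq_pfactor _ _ 2 1 (heis_gen i)) => //.
  exact/exponentP/exponent_heis_dvdn4.
by apply: contraTneq mii => gi2; rewrite -heis_gen_expg2_2E gi2 heis_one2E.
Qed.

End HeisenbergGroupTheory.

(* The two extra vertices are related to everything, themselves included, so
   that the group is neither abelian nor of exponent 2 even when [adj] is
   complete or [V] is empty. *)
Definition noncommuting_rel (V : finType) (adj : rel V) : rel (V + bool) :=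
  fun i j => if (i, j) is (inl u, inl v) then ~~ adj u v else true.

Lemma heis_gen_induced_commuting (V : finType) (adj : rel V) :
  simple_graph adj ->
  induced_commuting_embedding adj (fun u => heis_gen (noncommuting_rel adj) (inl u)).
Proof.
move=> [adj_sym adj_irr]; split=> [u v /heis_gen_inj[] // | u v].
rewrite /commuting_adj (inj_eq (@heis_gen_inj _ _)).
have inl_eq : (inl u == inl v :> V + bool) = (u == v) by [].
rewrite inl_eq; split=> [adj_uv | [neq_uv /commute_heis_genP]].
  have neq_uv : u != v by apply: contraTneq adj_uv => ->; rewrite adj_irr.
  split=> //; apply/commute_heis_genP.
  by rewrite inl_eq (negbTE neq_uv) /= !negbK adj_uv (adj_sym v u) adj_uv.
by rewrite inl_eq (negbTE neq_uv) /= !negbK => /andP[].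
Qed.

Theorem mainTheorem7 (V : finType) (adj : rel V) :
  simple_graph adj ->
  exists (gT : finGroupType) (f : V -> gT),
    [/\ induced_commuting_embedding adj f,
        nilpotent [set: gT], nil_class [set: gT] = 2
      & exponent [set: gT] = 4].
Proof.
move=> adj_simple; pose m := noncommuting_rel adj.
have class2 : nil_class [set: heis m] = 2.
  exact: (@nil_class_heis_eq2 _ m (inr false) (inr true)).
exists (heis m), (fun u => heis_gen m (inl u)); split=> //.
- exact: heis_gen_induced_commuting.
- by apply: small_nil_class; rewrite class2.
- exact: (@exponent_heis_eq4 _ m (inr false)).
Qed.
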